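(* Every power $p^m$ ($m\ge1$) of a block-cyclic permutation $p$ is block-cyclic, and every block-cyclic permutation avoids $321$; hence every block-cyclic permutation is strongly 321-avoiding. Moreover, if $h_n$ is the number of block-cyclic permutations of length $n$ (with $h_0=1$), then \[\sum_{n\ge0}h_nz^n=\frac{1}{1-z-\sum_{k\ge2}(k-1)z^k}=\frac{(1-z)^2}{1-3z+2z^2-z^3}.\]
   Context: Permutations are written in one-line notation $p=p_1\cdots p_n$ with $p_i=p(i)$; $p^m$ is the $m$-fold composition of $p$ with itself. $p$ contains a pattern $q=q_1\cdots q_k$ if there are indices $i_1<\cdots<i_k$ with $p_{i_r}<p_{i_s}$ iff $q_r<q_s$; otherwise $p$ avoids $q$. A permutation $p$ is strongly $q$-avoiding if both $p$ and $p^2$ avoid $q$. A permutation $p$ of length $n$ is block-cyclic if $p$ can be cut into blocks $B_1,\dots,B_t$ of consecutive positions such that for $i<j$ every entry of $B_i$ is smaller than every entry of $B_j$ (so each block's set of entries is an interval of integers $\{a+1,\dots,a+k\}$ occupying positions $a+1,\dots,a+k$), and each block either is a singleton or, in one-line notation, reads $(a+i)(a+i+1)\cdots(a+k)(a+1)\cdots(a+i-1)$ for some integers $1<i\le k$ (a non-identity power of the cycle $(a+1\;a+2\;\cdots\;a+k)$ restricted to the block). *)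

From HB Require Import structures.
From mathcomp Require Import all_boot all_order all_algebra all_fingroup.
From Stdlib Require Import ClassicalEpsilon.
Set Implicit Arguments. Unset Strict Implicit. Unset Printing Implicit Defensive.
Import GRing.Theory.

(* Permutations of length n are elements of 'S_n (positions/values 0..n-1);
   one-line notation p_i = p i.  Powers p ^+ m are m-fold compositions. *)

Definition contains (n k : nat) (p : 'S_n) (q : 'S_k) : Prop :=
  exists f : 'I_k -> 'I_n,
    (forall r s : 'I_k, r < s -> f r < f s) /\
    (forall r s : 'I_k, (p (f r) < p (f s)) = (q r < q s)).

Definition avoids (n k : nat) (p : 'S_n) (q : 'S_k) : Prop := ~ contains p q.

Definition strongly_avoids (n k : nat) (p : 'S_n) (q : 'S_k) : Prop :=
  avoids p q /\ avoids (p ^+ 2)%g q.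

(* The pattern 321 (0-indexed: i |-> 2 - i). *)
Definition pat321 : 'S_3 := perm (@rev_ord_inj 3).

(* Block-cyclic: a list of blocks (k, r) of sizes k (summing to n), laid out
   consecutively; the block starting at position a (0-indexed) sends position
   a + j to a + ((j + r) mod k).  A block is a singleton (k = 1, r = 0) or a
   non-identity power of the cycle, i.e. 1 <= r < k (r = i - 1 in the paper). *)
Definition block_cyclic (n : nat) (p : 'S_n) : Prop :=
  exists bs : seq (nat * nat),
    [/\ all (fun b => ((b.1 == 1%N) && (b.2 == 0%N)) || (0 < b.2 < b.1)) bs,
        sumn (map fst bs) = n &
        forall (t j : nat) (i : 'I_n),
          t < size bs -> j < (nth (0, 0) bs t).1 ->
          val i = sumn (take t (map fst bs)) + j ->
          val (p i) = sumn (take t (map fst bs))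
                      + (j + (nth (0, 0) bs t).2) %% (nth (0, 0) bs t).1 ].

Definition asbool (P : Prop) : bool :=
  if excluded_middle_informative P then true else false.

Definition h (n : nat) : nat := #|[pred p : 'S_n | asbool (block_cyclic p)]|.

(* Formal power series over int as coefficient sequences, Cauchy product. *)
Definition fps_mul (f g : nat -> int) (n : nat) : int :=
  (\sum_(k < n.+1) f k * g (n - k)%N)%R.

Definition den1 (k : nat) : int :=
  if k == 0%N then 1%R else if k == 1%N then (-1)%R else (- (k.-1)%:Z)%R.
Definition den2 (k : nat) : int := nth 0%R [:: 1; -3; 2; -1]%R k.
Definition num2 (k : nat) : int := nth 0%R [:: 1; -2; 1]%R k.
Definition one_fps (k : nat) : int := if k == 0%N then 1%R else 0%R.

From HB Require Import structures.
From mathcomp Require Import all_boot all_order all_algebra all_fingroup.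
From mathcomp Require Import zify.
From Stdlib Require Import ClassicalEpsilon.
Import GRing.Theory.
Set Implicit Arguments. Unset Strict Implicit. Unset Printing Implicit Defensive.

(* A block-cyclic permutation is encoded by its list of blocks (k, r): a block
   of size k rotated by r.  The map [block_map bs] on positions lays the blocks
   out consecutively, and [block_cyclicP] shows that block_cyclic p means p is
   the block map of an admissible block list of total n.
   - Powers: the m-th power of the rotation by r on k points is the rotation
     by m * r mod k, which is either admissible or the identity, i.e. k
     singletons; hence [block_cyclicX].
   - 321: a rotation has at most one descent and blocks are increasing
     intervals, so a block map has no decreasing triple ([block_map_no_321]);
     applied to p and p ^+ 2 this gives strong 321-avoidance.
   - Counting: a block map determines its admissible block list, so h n is the
     number of admissible block lists of total n ([h_block_lists]).  Choosing
     the first block gives h (n+1) = sum_k b(n+1-k) h k, where b j is the number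
     of admissible blocks of size j (1, then j - 1), i.e. h * den1 = 1.
   - Series: Cauchy products are coefficients of polynomial products, hence
     associative; den1 * (1 - z)^2 = den2 then gives h * den2 = (1 - z)^2. *)

Definition valid_block (b : nat * nat) : bool :=
  ((b.1 == 1) && (b.2 == 0)) || (0 < b.2 < b.1).

Definition total (bs : seq (nat * nat)) : nat := sumn (map fst bs).

Fixpoint block_map (bs : seq (nat * nat)) (i : nat) : nat :=
  match bs with
  | [::] => i
  | b :: bs' => if i < b.1 then (i + b.2) %% b.1 else b.1 + block_map bs' (i - b.1)
  end.

Lemma valid_block_pos b : valid_block b -> 0 < b.1.
Proof. by case/orP => [/andP [/eqP -> _] | /andP [r_gt0 r_lt]] //; lia. Qed.

Lemma valid_block_lt b : valid_block b -> b.2 < b.1.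
Proof. by case/orP => [/andP [/eqP -> /eqP ->] | /andP [_ ->]]. Qed.

Lemma total_cat a b : total (a ++ b) = total a + total b.
Proof. by rewrite /total map_cat sumn_cat. Qed.

Lemma block_map_cat a b i :
  block_map (a ++ b) i =
  if i < total a then block_map a i else total a + block_map b (i - total a).
Proof.
rewrite /total; elim: a i => [|x a IH] i /=; first by rewrite add0n subn0.
case: ifP => i_lt; first by have -> : i < x.1 + sumn (map fst a) by lia.
rewrite IH; case: ifP => in_a; case: ifP => in_xa //; try lia.
by rewrite subnDA addnA.
Qed.

Lemma block_map_offset bs t j : t < size bs -> j < (nth (0, 0) bs t).1 ->
  block_map bs (sumn (take t (map fst bs)) + j) =
  sumn (take t (map fst bs)) + (j + (nth (0, 0) bs t).2) %% (nth (0, 0) bs t).1.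
Proof.
elim: bs t => [|b s IH] [|t] //= t_lt j_lt; first by rewrite add0n j_lt.
have -> : b.1 + sumn (take t (map fst s)) + j < b.1 = false by lia.
by rewrite -addnA addKn IH // addnA.
Qed.

Lemma block_offset bs i : i < total bs -> exists t j,
  [/\ t < size bs, j < (nth (0, 0) bs t).1 & i = sumn (take t (map fst bs)) + j].
Proof.
rewrite /total; elim: bs i => [|b s IH] i //= i_lt.
have [i_lt_b | b_le_i] := ltnP i b.1; first by exists 0, i.
have [|t [j [t_lt j_lt i_eq]]] := IH (i - b.1); first lia.
by exists t.+1, j; split=> //=; lia.
Qed.

Lemma block_cyclicP n (p : 'S_n) : block_cyclic p <->
  exists bs, [/\ all valid_block bs, total bs = n &
                 forall i : 'I_n, val (p i) = block_map bs i].
Proof.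
split=> [[bs [bs_valid bs_total p_def]] | [bs [bs_valid bs_total p_def]]].
  exists bs; split=> // i.
  have [|t [j [t_lt j_lt i_def]]] := @block_offset bs i; first by rewrite /total bs_total.
  by rewrite (p_def t j i) // i_def block_map_offset.
by exists bs; split=> // t j i t_lt j_lt i_def; rewrite p_def i_def block_map_offset.
Qed.

(* The m-th power of a block (k, r) is the rotation by m * r mod k, which
   splits into k singletons when it is trivial. *)
Definition power_block (m : nat) (b : nat * nat) : seq (nat * nat) :=
  if (m * b.2) %% b.1 == 0 then nseq b.1 (1, 0) else [:: (b.1, (m * b.2) %% b.1)].

Definition power_blocks (m : nat) (bs : seq (nat * nat)) : seq (nat * nat) :=
  flatten (map (power_block m) bs).

Lemma power_blocks_cons m b s :
  power_blocks m (b :: s) = power_block m b ++ power_blocks m s.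
Proof. by []. Qed.

Lemma total_power_block m b : total (power_block m b) = b.1.
Proof.
by rewrite /power_block; case: ifP; rewrite /total /= ?map_nseq ?sumn_nseq ?addn0 ?mul1n.
Qed.

Lemma valid_power_block m b : valid_block b -> all valid_block (power_block m b).
Proof.
move=> b_valid; rewrite /power_block; case: ifP => [_ | rot_ne0].
  by apply/allP => x /nseqP [-> _].
by rewrite /= andbT /valid_block /= lt0n rot_ne0 ltn_pmod ?orbT ?valid_block_pos.
Qed.

Lemma iter_block_map_head b s m i : 0 < b.1 -> i < b.1 ->
  iter m (block_map (b :: s)) i = (i + m * b.2) %% b.1.
Proof.
move=> b_gt0 i_lt; elim: m => [|m IH]; first by rewrite mul0n addn0 modn_small.
have step j : j < b.1 -> block_map (b :: s) j = (j + b.2) %% b.1 by move=> /= ->.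
by rewrite iterS IH step ?ltn_pmod // modnDml mulSn; congr (_ %% _); lia.
Qed.

Lemma iter_block_map_tail b s m i : b.1 <= i ->
  iter m (block_map (b :: s)) i = b.1 + iter m (block_map s) (i - b.1).
Proof.
move=> b_le_i; elim: m => [|m IH]; first by rewrite /= subnKC.
have step j : block_map (b :: s) (b.1 + j) = b.1 + block_map s j.
  by rewrite /= ltnNge leq_addr addKn.
by rewrite !iterS IH step.
Qed.

Lemma block_map_power_block m b i : 0 < b.1 -> i < b.1 ->
  block_map (power_block m b) i = (i + m * b.2) %% b.1.
Proof.
move=> b_gt0 i_lt; rewrite /power_block; case: ifP => [/eqP rot0 | _] /=.
  rewrite -modnDmr rot0 addn0 modn_small //.
  by elim: b.1 i i_lt => [|k IH] [|i] //= i_lt; rewrite IH //; lia.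
by rewrite i_lt modnDmr.
Qed.

Lemma block_map_power_blocks m bs i : all valid_block bs -> i < total bs ->
  block_map (power_blocks m bs) i = iter m (block_map bs) i.
Proof.
elim: bs i => [|b s IH] i; first by move=> _; rewrite /total.
move=> /andP [b_valid s_valid] i_lt.
have b_gt0 := valid_block_pos b_valid.
rewrite power_blocks_cons block_map_cat total_power_block.
have [i_lt_b | b_le_i] := ltnP i b.1.
  by rewrite block_map_power_block // iter_block_map_head.
rewrite iter_block_map_tail // -IH //.
by rewrite /total /= in i_lt *; lia.
Qed.

Lemma total_power_blocks m bs : total (power_blocks m bs) = total bs.
Proof.
elim: bs => [|b s IH] //=.
by rewrite power_blocks_cons total_cat IH total_power_block.
Qed.

Lemma valid_power_blocks m bs : all valid_block bs -> all valid_block (power_blocks m bs).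
Proof.
elim: bs => [|b s IH] //= /andP [b_valid s_valid].
by rewrite power_blocks_cons all_cat valid_power_block // IH.
Qed.

Lemma block_cyclicX n m (p : 'S_n) : block_cyclic p -> block_cyclic (p ^+ m)%g.
Proof.
move/block_cyclicP => [bs [bs_valid bs_total p_def]]; apply/block_cyclicP.
exists (power_blocks m bs).
split; [exact: valid_power_blocks | by rewrite total_power_blocks |].
move=> i; rewrite permX block_map_power_blocks ?bs_total //.
by elim: m => [|m IH] //=; rewrite p_def IH.
Qed.

Lemma rotation_val k r x : x < k -> r < k ->
  (x + r) %% k = if x + r < k then x + r else x + r - k.
Proof.
move=> x_lt r_lt; case: ifP => [sum_lt | sum_ge]; first by rewrite modn_small.
have {1}-> : x + r = (x + r - k) + k by lia.
by rewrite modnDr modn_small //; lia.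
Qed.

Lemma block_map_lt bs i : all valid_block bs -> i < total bs -> block_map bs i < total bs.
Proof.
rewrite /total; elim: bs i => [|b s IH] i //= /andP [b_valid s_valid] i_lt.
case: ifP => i_in_b; first by have := ltn_pmod (i + b.2) (valid_block_pos b_valid); lia.
by have := IH (i - b.1) s_valid; lia.
Qed.

(* An admissible block map has no decreasing subsequence of length three:
   each rotation has at most one descent, and all values of an earlier block
   lie below all values of a later one. *)
Lemma block_map_no_321 bs a b c : all valid_block bs ->
  a < b -> b < c -> c < total bs ->
  block_map bs c < block_map bs b -> block_map bs b < block_map bs a -> False.
Proof.
rewrite /total; elim: bs a b c => [|[k r] s IH] a b c /=; first by move=> _; lia.
move=> /andP [kr_valid s_valid] a_lt_b b_lt_c c_lt.
have k_gt0 := valid_block_pos kr_valid; have r_lt := valid_block_lt kr_valid.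
rewrite /= in k_gt0 r_lt.
have [c_lt_k | k_le_c] := ltnP c k.
  have a_lt_k : a < k by lia.
  have b_lt_k : b < k by lia.
  by rewrite a_lt_k b_lt_k !rotation_val //; repeat case: ifP; lia.
have [a_lt_k | k_le_a] := ltnP a k.
  by have := ltn_pmod (a + r) k_gt0; case: ifP => b_lt_k; lia.
rewrite (ltnNge b k) (leq_trans k_le_a (ltnW a_lt_b)) /= !ltn_add2l => cb ba.
by apply: (IH (a - k) (b - k) (c - k)) => //; lia.
Qed.

Lemma block_cyclic_avoids_321 n (p : 'S_n) : block_cyclic p -> avoids p pat321.
Proof.
move/block_cyclicP => [bs [bs_valid bs_total p_def]] [f [f_incr f_pat]].
pose i0 : 'I_3 := Ordinal (isT : 0 < 3).
pose i1 : 'I_3 := Ordinal (isT : 1 < 3).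
pose i2 : 'I_3 := Ordinal (isT : 2 < 3).
have desc10 := f_pat i1 i0; have desc21 := f_pat i2 i1.
rewrite /pat321 !permE /= !p_def in desc10 desc21.
apply: (block_map_no_321 bs_valid (f_incr i0 i1 isT) (f_incr i1 i2 isT)).
- by rewrite bs_total.
- by rewrite desc21.
- by rewrite desc10.
Qed.

(* Since p ^+ 2 is block-cyclic as well, p is strongly 321-avoiding. *)
Lemma block_cyclic_strongly_avoids_321 n (p : 'S_n) :
  block_cyclic p -> strongly_avoids p pat321.
Proof.
by move=> p_bc; split; apply: block_cyclic_avoids_321; last exact: block_cyclicX.
Qed.

Lemma block_map_inj bs i j : all valid_block bs -> i < total bs -> j < total bs ->
  block_map bs i = block_map bs j -> i = j.
Proof.
rewrite /total; elim: bs i j => [|[k r] s IH] i j //= /andP [kr_valid s_valid] i_lt j_lt.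
have k_gt0 := valid_block_pos kr_valid; rewrite /= in k_gt0.
have rot_lt x : (x + r) %% k < k by exact: ltn_pmod.
have [i_lt_k | k_le_i] := ltnP i k; have [j_lt_k | k_le_j] := ltnP j k.
- by move/eqP; rewrite eqn_modDr !modn_small // => /eqP.
- by have := rot_lt i; lia.
- by have := rot_lt j; lia.
- move/eqP; rewrite eqn_add2l => /eqP /IH eq_shift.
  suff : i - k = j - k by lia.
  by apply: eq_shift => //; lia.
Qed.

(* The permutation of 'I_n given by a block list (the identity if there is
   none with that block map). *)
Definition perm_of_blocks (n : nat) (bs : seq (nat * nat)) : 'S_n :=
  odflt 1%g [pick q : 'S_n | [forall i, val (q i) == block_map bs i]].

Lemma perm_of_blocksE n bs : all valid_block bs -> total bs = n ->
  forall i, val (perm_of_blocks n bs i) = block_map bs i.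
Proof.
move=> bs_valid bs_total; rewrite /perm_of_blocks.
case: pickP => [q /forallP q_def | no_perm] i; first exact/eqP.
have map_lt (j : 'I_n) : block_map bs j < n.
  by have := @block_map_lt bs j bs_valid; rewrite bs_total; apply.
have map_inj : injective (fun j : 'I_n => Ordinal (map_lt j)).
  move=> j1 j2 /(congr1 val) /= eq_map; apply: val_inj.
  by apply: (block_map_inj bs_valid _ _ eq_map); rewrite bs_total.
have /forallPn [j] := negbT (no_perm (perm map_inj)).
by rewrite permE eqxx.
Qed.

Lemma rotation_escapes k k' r' : 0 < k -> valid_block (k', r') -> k < k' ->
  exists2 i, i < k & k <= (i + r') %% k'.
Proof.
move=> k_gt0 /orP [/andP [/= /eqP k'1 _] | /andP [/= r'_gt0 r'_lt]] k_lt; first lia.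
have [k_le_r' | r'_lt_k] := leqP k r'.
  by exists 0; rewrite // add0n modn_small.
by exists (k - r'); rewrite ?subnK ?modn_small //; lia.
Qed.

Lemma block_map_determines bs bs' : all valid_block bs -> all valid_block bs' ->
  total bs = total bs' -> {in gtn (total bs), block_map bs =1 block_map bs'} ->
  bs = bs'.
Proof.
rewrite /total; elim: bs bs' => [|[k r] s IH] [|[k' r'] s'] //=.
- by move=> _ /andP [/valid_block_pos /= ? _]; lia.
- by move=> /andP [/valid_block_pos /= ? _]; lia.
move=> /andP [kr_valid s_valid] /andP [kr'_valid s'_valid] eq_total eq_map.
have k_gt0 := valid_block_pos kr_valid; have k'_gt0 := valid_block_pos kr'_valid.
have r_lt := valid_block_lt kr_valid; have r'_lt := valid_block_lt kr'_valid.
rewrite /= in k_gt0 k'_gt0 r_lt r'_lt.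
have eq_k : k = k'.
  have [k_lt | k'_lt | //] := ltngtP k k'.
    have [i i_lt i_escapes] := rotation_escapes k_gt0 kr'_valid k_lt.
    have eq_i := eq_map i; rewrite inE /= i_lt (ltn_trans i_lt k_lt) in eq_i.
    by have := eq_i ltac:(lia); have := ltn_pmod (i + r) k_gt0; lia.
  have [i i_lt i_escapes] := rotation_escapes k'_gt0 kr_valid k'_lt.
  have eq_i := eq_map i; rewrite inE /= i_lt (ltn_trans i_lt k'_lt) in eq_i.
  by have := eq_i ltac:(lia); have := ltn_pmod (i + r') k'_gt0; lia.
subst k'.
have eq_r : r = r' by have := eq_map 0; rewrite inE /= k_gt0 !add0n !modn_small //; apply; lia.
subst r'; congr (_ :: _); apply: IH => //; first lia.
move=> i; rewrite inE /= => i_lt; have := eq_map (k + i).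
rewrite inE /= ltn_add2l i_lt ltnNge leq_addr addKn => /(_ isT) /eqP.
by rewrite eqn_add2l => /eqP.
Qed.

Definition rotations (k : nat) : seq nat := if k == 1 then [:: 0] else iota 1 k.-1.

Definition blocks_upto (n : nat) : seq (nat * nat) :=
  [seq (k, r) | k <- iota 1 n, r <- rotations k].

(* Lists of admissible blocks of total n, built by choosing the first block;
   the fuel f bounds the recursion depth and is irrelevant once n <= f. *)
Fixpoint block_lists_fuel (f n : nat) : seq (seq (nat * nat)) :=
  if n == 0 then [:: [::]] else
  if f is f'.+1 then [seq b :: s | b <- blocks_upto n, s <- block_lists_fuel f' (n - b.1)]
  else [::].

Definition block_lists (n : nat) : seq (seq (nat * nat)) := block_lists_fuel n n.

Lemma block_lists_fuelS f n : block_lists_fuel f.+1 n.+1 =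
  [seq b :: s | b <- blocks_upto n.+1, s <- block_lists_fuel f (n.+1 - b.1)].
Proof. by []. Qed.

Lemma mem_blocks_upto n b : (b \in blocks_upto n) = valid_block b && (b.1 <= n).
Proof.
case: b => k r /=.
apply/allpairsPdep/andP => [[k' [r' [k'_in r'_in [-> ->]]]] | [kr_valid k_le]].
  move: k'_in r'_in; rewrite mem_iota /rotations /valid_block /=.
  case: eqP => [-> | k'_ne1]; first by rewrite inE => k'_in /eqP ->; split=> //; lia.
  by rewrite mem_iota => k'_in r'_in; split; [apply/orP; right; apply/andP |]; lia.
exists k, r; split=> //; first by rewrite mem_iota; have /= := valid_block_pos kr_valid; lia.
move: kr_valid; rewrite /rotations /valid_block /=.
by case: eqP => [-> | k_ne1]; rewrite ?inE ?mem_iota; case/orP => /andP []; lia.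
Qed.

Lemma total_eq0 bs : all valid_block bs -> total bs = 0 -> bs = [::].
Proof. by case: bs => [|b s] //= /andP [/valid_block_pos b_gt0 _]; rewrite /total /=; lia. Qed.

Lemma mem_block_lists_fuel f n bs : n <= f ->
  (bs \in block_lists_fuel f n) = all valid_block bs && (total bs == n).
Proof.
elim: f n bs => [|f IH] n bs n_le /=.
  have -> : n = 0 by lia.
  by rewrite inE; apply/eqP/andP => [-> | [bs_valid /eqP /(total_eq0 bs_valid)]].
case: eqP => [-> | n_ne0].
  by rewrite inE; apply/eqP/andP => [-> | [bs_valid /eqP /(total_eq0 bs_valid)]].
apply/allpairsPdep/andP => [[b [s [b_in s_in ->]]] | ].
  move: b_in; rewrite mem_blocks_upto => /andP [b_valid b_le].
  have b_gt0 := valid_block_pos b_valid.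
  move: s_in; rewrite IH; last lia.
  move=> /andP [s_valid /eqP s_total].
  by rewrite /= b_valid s_valid /total /= -/(total s) s_total subnKC.
case: bs => [|b s] [bs_valid /eqP bs_total]; first by rewrite /total /= in bs_total; lia.
move: bs_valid => /= /andP [b_valid s_valid]; have b_gt0 := valid_block_pos b_valid.
exists b, s; split=> //; first by rewrite mem_blocks_upto b_valid /= -bs_total /total /=; lia.
by rewrite IH; [rewrite s_valid /= -bs_total /total /=; apply/eqP | ]; lia.
Qed.

Lemma uniq_block_lists_fuel f n : uniq (block_lists_fuel f n).
Proof.
elim: f n => [|f IH] n /=; case: eqP => // _.
apply: allpairs_uniq_dep => [|b _|]; [|exact: IH|by move=> [? ?] [? ?] _ _ [-> ->]].
apply: allpairs_uniq_dep => [|k _|]; first exact: iota_uniq.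
  by rewrite /rotations; case: eqP => // _; exact: iota_uniq.
by move=> [? ?] [? ?] _ _ [-> ->].
Qed.

Lemma size_block_lists_fuel f n : n <= f ->
  size (block_lists_fuel f n) = size (block_lists n).
Proof.
move=> n_le; apply/perm_size/uniq_perm; rewrite ?uniq_block_lists_fuel // => bs.
by rewrite !mem_block_lists_fuel.
Qed.

Lemma h_block_lists n : h n = size (block_lists n).
Proof.
have mem_lists bs : (bs \in block_lists n) = all valid_block bs && (total bs == n).
  exact: mem_block_lists_fuel.
have perms_uniq : uniq (map (perm_of_blocks n) (block_lists n)).
  rewrite map_inj_in_uniq ?uniq_block_lists_fuel // => bs bs'.
  rewrite !mem_lists => /andP [bs_valid /eqP bs_total] /andP [bs'_valid /eqP bs'_total].
  move=> eq_perm.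
  apply: block_map_determines; rewrite ?bs_total ?bs'_total // => i /= i_lt.
  by rewrite -(perm_of_blocksE bs_valid bs_total (Ordinal i_lt)) eq_perm perm_of_blocksE.
rewrite /h -(size_map (perm_of_blocks n)) -(card_uniqP perms_uniq).
apply: eq_card => p; rewrite inE /asbool.
case: excluded_middle_informative => [p_bc | not_bc].
  have [bs [bs_valid bs_total p_def]] := proj1 (block_cyclicP p) p_bc.
  apply/esym/mapP; exists bs; first by rewrite mem_lists bs_valid bs_total eqxx.
  by apply/permP => i; apply: val_inj; rewrite p_def perm_of_blocksE.
apply/esym/mapP => [[bs]]; rewrite mem_lists => /andP [bs_valid /eqP bs_total] p_def.
by apply: not_bc; apply/block_cyclicP; exists bs; split=> // i; rewrite p_def perm_of_blocksE.
Qed.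

(* Choosing the first block of size n + 1 - k gives the recurrence
   h (n + 1) = sum_(k <= n) #(admissible blocks of size n + 1 - k) * h k. *)
Lemma block_lists_rec n : size (block_lists n.+1) =
  \sum_(k < n.+1) size (rotations (n - k).+1) * size (block_lists k).
Proof.
rewrite {1}/block_lists block_lists_fuelS size_allpairs_dep sumnE big_map big_allpairs_dep.
rewrite (eq_big_seq (fun k => size (rotations k) * size (block_lists (n.+1 - k)))); last first.
  move=> k; rewrite mem_iota => k_in.
  rewrite (eq_bigr (fun=> size (block_lists (n.+1 - k)))) => [|r _]; last first.
    by rewrite /= size_block_lists_fuel //; lia.
  by rewrite big_const_seq count_predT iter_addn_0 mulnC.
rewrite -[iota 1 _]/(iota (1 + 0) _) iotaDl big_map -/(index_iota 0 n.+1) big_mkord.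
rewrite (reindex_inj rev_ord_inj); apply: eq_bigr => i _ /=.
by have i_lt := ltn_ord i; rewrite !subSS subKn // addnC addn1.
Qed.

Section GeneratingFunction.
Local Open Scope ring_scope.

(* Only finitely many coefficients enter a coefficient of a Cauchy product,
   so it can be read off a product of polynomials agreeing with the factors
   up to that degree. *)
Lemma fps_mul_coef (f g : nat -> int) (p q : {poly int}) n :
  (forall i, (i <= n)%N -> p`_i = f i) -> (forall i, (i <= n)%N -> q`_i = g i) ->
  fps_mul f g n = (p * q)`_n.
Proof.
move=> p_f q_g; rewrite coefM /fps_mul; apply: eq_bigr => i _.
by rewrite p_f ?q_g ?leq_subr // -ltnS.
Qed.

Definition trunc_poly (n : nat) (f : nat -> int) : {poly int} := \poly_(i < n.+1) f i.

Lemma coef_trunc_poly n f i : (i <= n)%N -> (trunc_poly n f)`_i = f i.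
Proof. by rewrite coef_poly ltnS => ->. Qed.

Lemma coef_trunc_mul n f g i : (i <= n)%N ->
  (trunc_poly n f * trunc_poly n g)`_i = fps_mul f g i.
Proof.
move=> i_le; symmetry; apply: fps_mul_coef => j j_le;
  by apply: coef_trunc_poly; apply: leq_trans i_le.
Qed.

Lemma fps_mulC f g n : fps_mul f g n = fps_mul g f n.
Proof. by rewrite -!(@coef_trunc_mul n) // mulrC. Qed.

Lemma fps_mulA f g k n : fps_mul f (fps_mul g k) n = fps_mul (fps_mul f g) k n.
Proof.
rewrite (fps_mul_coef (@coef_trunc_poly n f) (@coef_trunc_mul n g k)) mulrA.
by rewrite (fps_mul_coef (@coef_trunc_mul n f g) (@coef_trunc_poly n k)).
Qed.

Lemma eq_fps_mul f f' g g' n : f =1 f' -> g =1 g' -> fps_mul f g n = fps_mul f' g' n.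
Proof. by move=> eq_f eq_g; apply: eq_bigr => i _; rewrite eq_f eq_g. Qed.

Lemma fps_mul1 g n : fps_mul one_fps g n = g n.
Proof.
by rewrite /fps_mul big_ord_recl big1 ?mul1r ?subn0 ?addr0 // => i _; rewrite mul0r.
Qed.

(* den1 = 1 - sum_(k >= 1) b_k z^k, where b_k is the number of admissible
   blocks of size k. *)
Lemma den1_rotations k : den1 k.+1 = - (size (rotations k.+1))%:Z.
Proof. by case: k => [|k] //; rewrite /den1 /rotations /= size_iota. Qed.

(* The recurrence for h says that its series times den1 is 1. *)
Lemma h_den1 n : fps_mul (fun k => Posz (h k)) den1 n = one_fps n.
Proof.
case: n => [|n]; first by rewrite /fps_mul big_ord1 h_block_lists.
rewrite /fps_mul big_ord_recr subnn /= mulr1.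
under eq_bigr => k _ do rewrite subSn ?den1_rotations -1?ltnS // mulrN -PoszM mulnC.
rewrite sumrN -(big_morph Posz PoszD (erefl 0%Z)).
rewrite (eq_bigr (fun k : 'I_n.+1 => size (rotations (n - k).+1) * size (block_lists k))%N);
  last by move=> k _; rewrite h_block_lists.
by rewrite -block_lists_rec -h_block_lists addNr.
Qed.

Lemma den1_num2 n : fps_mul den1 num2 n = den2 n.
Proof.
rewrite fps_mulC; case: n => [|[|[|n]]]; rewrite /fps_mul ?big_ord0 ?big_ord1 //.
- by rewrite big_ord_recl big_ord1.
- by rewrite !big_ord_recl big_ord0.
do 3 rewrite big_ord_recl; rewrite big1 => [|i _]; last by rewrite /num2 nth_default ?mul0r.
rewrite /= !subSS !subn0 /den1 /den2 /num2 /=.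
by case: n => [|n] //=; rewrite nth_nil; lia.
Qed.

(* h * den2 = h * (den1 * (1 - z)^2) = (h * den1) * (1 - z)^2 = (1 - z)^2. *)
Lemma h_den2 n : fps_mul (fun k => Posz (h k)) den2 n = num2 n.
Proof.
rewrite (@eq_fps_mul _ (fun k => Posz (h k)) _ (fps_mul den1 num2)) // => [|k];
  last by rewrite den1_num2.
by rewrite fps_mulA (@eq_fps_mul _ one_fps _ num2) ?fps_mul1 // => k; rewrite h_den1.
Qed.

End GeneratingFunction.

Theorem mainTheorem11 :
  (forall (n m : nat) (p : 'S_n), 0 < m -> block_cyclic p -> block_cyclic (p ^+ m)%g) /\
  (forall (n : nat) (p : 'S_n), block_cyclic p -> avoids p pat321) /\
  (forall (n : nat) (p : 'S_n), block_cyclic p -> strongly_avoids p pat321) /\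
  h 0 = 1%N /\
  (forall n : nat, fps_mul (fun k => Posz (h k)) den1 n = one_fps n) /\
  (forall n : nat, fps_mul (fun k => Posz (h k)) den2 n = num2 n).
Proof.
split; first by move=> n m p _; exact: block_cyclicX.
split; first exact: block_cyclic_avoids_321.
split; first exact: block_cyclic_strongly_avoids_321.
split; first by rewrite h_block_lists.
by split; [exact: h_den1 | exact: h_den2].
Qed.
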